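(* Let $s=a_1^{m_1}\cdots a_r^{m_r}$ and $t=a_1^{m'_1}\cdots a_r^{m'_r}$ be run-length encodings of two non-empty strings with the same run symbols $a_1,\dots,a_r$ (and $m_i,m'_i\ge1$), and let $D=\{i: m_i\ne m'_i\}$. Write $\mathcal{F}(s)=[\tau_0,\dots,\tau_{k-1}]$ and $\mathcal{F}(t)=[\tau'_0,\dots,\tau'_{k-1}]$ (both have the same length $k$). Then the set of indices $d$ with $\tau_d\ne\tau'_d$ is exactly $\{\min(i,r+1-i): i\in D\}$. In particular, if $s$ and $t$ differ in a single run length $m_i$, then exactly one token differs, namely the one at index $\min(i,r+1-i)$.
   Context: Let $\Sigma$ be an alphabet and $\texttt{@},\texttt{\$}$ two distinct symbols not in $\Sigma$. The run-length encoding of a non-empty string is the unique decomposition $a_1^{m_1}\cdots a_r^{m_r}$ with $a_i\in\Sigma$, $m_i\ge1$, $a_i\ne a_{i+1}$ ($a^m$ is $a$ repeated $m$ times). For $s$ with $|s|=n$ let $\hat s=\texttt{@}\,s\,\texttt{\$}$ (positions $1,\dots,n+2$); $\hat s[i..j)$ is the substring at positions $i,\dots,j-1$. The leading (trailing) run of a non-empty string is its longest prefix (suffix) consisting of one repeated symbol. The Flashback decomposition $\mathcal{F}(s)$ is the sequence of tokens $(\sigma,p)$ (symbol string $\sigma$, integer split position $p\ge0$) produced as follows, starting from active span $[lo,hi)=[1,n+3)$: if $lo\ge hi$, stop. Let $\ell$ be the leading-run length of $\hat s[lo..hi)$. If $\ell=hi-lo$, append $(\hat s[lo..hi),0)$ and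 stop. Otherwise let $\hat s[r'..hi)$ be the trailing run of $\hat s[lo..hi)$ and $\sigma=\hat s[lo..lo+\ell)\cdot\hat s[r'..hi)$; if $lo+\ell\ge r'$, append $(\sigma,0)$ and stop; otherwise append $(\sigma,\ell)$ and repeat with $[lo+\ell,r')$. Tokens are indexed $\tau_0,\tau_1,\dots$ in order of emission. *)

From mathcomp Require Import all_boot.
Set Implicit Arguments. Unset Strict Implicit. Unset Printing Implicit Defensive.

(* Extended alphabet Sigma ∪ {@, $}: @ = None, $ = Some None, a = Some (Some a). *)
Definition hsym (S : eqType) := option (option S).
Definition sym_at {S : eqType} : hsym S := None.
Definition sym_dollar {S : eqType} : hsym S := Some None.
Definition sym {S : eqType} (a : S) : hsym S := Some (Some a).

Definition shat {S : eqType} (s : seq S) : seq (hsym S) :=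
  sym_at :: rcons (map sym s) sym_dollar.

(* w[i..j) with 1-based positions i,...,j-1 *)
Definition substr {X : Type} (w : seq X) (i j : nat) : seq X :=
  take (j - i) (drop i.-1 w).

Definition lead_run_len {X : eqType} (w : seq X) : nat :=
  if w is x :: w' then (find (predC1 x) w').+1 else 0.

Definition trail_run_len {X : eqType} (w : seq X) : nat := lead_run_len (rev w).

Definition token (S : eqType) := (seq (hsym S) * nat)%type.

(* one run of the loop on active span [lo,hi) of the full string w,
   with a fuel argument (fuel >= size w + 1 is always enough, since lo
   strictly increases at every iteration). *)
Fixpoint flash_loop {S : eqType} (fuel : nat) (w : seq (hsym S)) (lo hi : nat)
  : seq (token S) :=
  match fuel with
  | 0 => [::]
  | fuel'.+1 =>
    if hi <= lo then [::] else
    let u := substr w lo hi in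
    let l := lead_run_len u in
    if l == hi - lo then [:: (u, 0)] else
    let r' := hi - trail_run_len u in
    let sigma := substr w lo (lo + l) ++ substr w r' hi in
    if r' <= lo + l then [:: (sigma, 0)]
    else (sigma, l) :: flash_loop fuel' w (lo + l) r'
  end.

Definition flashback {S : eqType} (s : seq S) : seq (token S) :=
  flash_loop (size s).+3 (shat s) 1 (size s).+3.

Definition rle_string {S : eqType} (a : seq S) (m : seq nat) : seq S :=
  flatten [seq nseq p.2 p.1 | p <- zip a m].

Definition rle_ok {S : eqType} (a : seq S) (m : seq nat) : Prop :=
  [/\ size m = size a, sorted (fun x y => x != y) a & all (fun k => 0 < k) m].

From mathcomp Require Import all_boot zify.

Set Implicit Arguments.
Unset Strict Implicit.
Unset Printing Implicit Defensive.

(* The runs of [shat s] are @, a_1^m_1, ..., a_r^m_r, $, consecutive runs having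
   distinct symbols. On a span made of whole runs, one step of the loop emits its
   leading and trailing run, split at the length of the leading one (at 0 when they
   exhaust the span), and continues on the runs in between. Hence tau_d consists of
   runs d and r+1-d of [shat s], and two such tokens over the same symbols agree iff
   both run lengths agree. The runs @ and $ have length 1 in both strings, so
   tau_d <> tau'_d iff m_d <> m'_d or m_(r+1-d) <> m'_(r+1-d), with 2d <= r+1;
   that is, d = min(i, r+1-i) for some i in D. *)

Lemma seq_outer_ind (T : Type) (P : seq T -> Prop) :
  P [::] -> (forall x, P [:: x]) -> (forall x y s, P s -> P (x :: rcons s y)) ->
  forall s, P s.
Proof.
move=> P0 P1 Pxy s; elim: {s}(size s) {-2}s (leqnn (size s)) => [|n IH] [|x s] //.
case/lastP: s => [|s y] // /=; rewrite size_rcons => hs.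
by apply: Pxy; apply: IH; lia.
Qed.

Lemma nth_cons_rcons (T : Type) (x0 x y : T) s i :
  0 < i <= size s -> nth x0 (x :: rcons s y) i = nth x0 s i.-1.
Proof. by case: i => // i /= hi; rewrite nth_rcons hi. Qed.

Lemma nth_cons_rcons_last (T : Type) (x0 x y : T) s :
  nth x0 (x :: rcons s y) (size s).+1 = y.
Proof. by rewrite /= nth_rcons ltnn eqxx. Qed.

Section Runs.
Variable X : eqType.
Implicit Types (x y z : X) (v b : seq X) (c : seq nat).

Lemma lead_run_len_nseq_cat x k v :
  0 < k -> head x v != x -> lead_run_len (nseq k x ++ v) = k.
Proof.
case: k => // k _; rewrite /lead_run_len /= find_cat has_nseq /= eqxx andbF size_nseq.
by case: v => [|z v] /=; rewrite ?eqxx // => ->; rewrite addn0.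
Qed.

Lemma lead_run_len_nseq x k : lead_run_len (nseq k x) = k.
Proof.
by case: k => // k; rewrite /lead_run_len /= hasNfind ?size_nseq // has_nseq /= eqxx andbF.
Qed.

Lemma trail_run_len_cat_nseq y k v :
  0 < k -> last y v != y -> trail_run_len (v ++ nseq k y) = k.
Proof.
move=> hk hv; rewrite /trail_run_len rev_cat rev_nseq lead_run_len_nseq_cat //.
by case/lastP: v hv => [|v z]; rewrite ?eqxx // rev_rcons last_rcons.
Qed.

Lemma head_cat_nseq x y k v : 0 < k -> head x (v ++ nseq k y) = head y v.
Proof. by case: k => // k; case: v. Qed.

Lemma last_nseq x y k : 0 < k -> last y (nseq k x) = x.
Proof. by case: k => // k _; elim: k. Qed.

Lemma eq_nseq x k k' : (nseq k x == nseq k' x) = (k == k').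
Proof. by apply/eqP/eqP => [/(congr1 size)|->]; rewrite ?size_nseq. Qed.

Lemma eq_nseq_cat2 x y k j k' j' : x != y ->
  (nseq k x ++ nseq j y == nseq k' x ++ nseq j' y) = (k == k') && (j == j').
Proof.
move=> xy; apply/eqP/andP => [e|[/eqP-> /eqP->]] //.
have count_x n n' : count_mem x (nseq n x ++ nseq n' y) = n.
  by rewrite count_cat !count_nseq /= eqxx eq_sym (negPf xy) mul1n mul0n addn0.
have count_y n n' : count_mem y (nseq n x ++ nseq n' y) = n'.
  by rewrite count_cat !count_nseq /= eqxx (negPf xy) mul1n mul0n.
move: (congr1 (count_mem x) e) (congr1 (count_mem y) e).
by rewrite !count_x !count_y => -> ->.
Qed.

Lemma rle_string_cons x b k c :
  rle_string (x :: b) (k :: c) = nseq k x ++ rle_string b c.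
Proof. by []. Qed.

Lemma rle_string1 x k : rle_string [:: x] [:: k] = nseq k x.
Proof. exact: cats0. Qed.

Lemma rle_string_rcons b c y j : size b = size c ->
  rle_string (rcons b y) (rcons c j) = rle_string b c ++ nseq j y.
Proof. by move=> h; rewrite /rle_string zip_rcons // map_rcons flatten_rcons. Qed.

Lemma head_rle_string z b c : rle_ok b c -> head z (rle_string b c) = head z b.
Proof. by case: b c => [|x b] [|[|k] c] // [] //. Qed.

Lemma rle_ok_cons x b k c : rle_ok (x :: b) (k :: c) -> rle_ok b c.
Proof. by case=> [[sc] /path_sorted sb /andP[_ pc]]. Qed.

Lemma last_rle_string z b c : rle_ok b c -> last z (rle_string b c) = last z b.
Proof.
elim: b c z => [|x b IH] [|k c] z // ok; first by case: ok.
have [_ _ /andP[hk _]] := ok.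
by rewrite /= last_cat last_nseq // IH //; exact: rle_ok_cons ok.
Qed.

Lemma leq_size_rle_string b c : rle_ok b c -> size b <= size (rle_string b c).
Proof.
elim: b c => [|x b IH] [|[|k] c] // ok; try by case: ok.
by rewrite /= size_cat size_nseq ltnS (leq_trans (IH _ (rle_ok_cons ok))) ?leq_addl.
Qed.

Lemma rle_ok_outer x y b k c j : rle_ok (x :: rcons b y) (k :: rcons c j) ->
  [/\ 0 < k, 0 < j, rle_ok b c, head y b != x & last x b != y].
Proof.
case=> /= /eqP; rewrite eqSS !size_rcons eqSS => /eqP sc.
rewrite /sorted rcons_path /= all_rcons => /andP[pb lb] /and3P[hk hj pc].
split=> //; first by split; [|exact: path_sorted pb|].
by case: b pb lb {sc} => [|z b] /= => [_|/andP[]]; rewrite eq_sym.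
Qed.

Lemma rle_ok_outer_split x y b c :
  rle_ok (x :: rcons b y) c -> exists k c' j, c = k :: rcons c' j.
Proof.
case: c => [|k c] [] //; case/lastP: c => [|c j] /=; last by exists k, c, j.
by rewrite size_rcons.
Qed.

End Runs.

Lemma substr_mid (T : Type) (w p u q : seq T) i j : w = p ++ u ++ q ->
  i = (size p).+1 -> j = (size p + size u).+1 -> substr w i j = u.
Proof.
move=> -> -> ->; rewrite /substr subSS addKn /=.
by rewrite drop_size_cat // take_size_cat.
Qed.

Section FlashOn.
Variable S : eqType.
Implicit Types (pre post u v : seq (hsym S)) (x y : hsym S).

(* Positions are 1-based: this runs the loop on the span occupied by [u]. *)
Definition flash_on n pre u post :=
  flash_loop n (pre ++ u ++ post) (size pre).+1 (size pre + size u).+1.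

Lemma flash_on_nil n pre post : flash_on n pre [::] post = [::].
Proof. by case: n => //= n; rewrite /flash_on /= addn0 leqnn. Qed.

Lemma flash_on_run n pre post x k :
  0 < k -> flash_on n.+1 pre (nseq k x) post = [:: (nseq k x, 0)].
Proof.
move=> hk; rewrite /flash_on /= (substr_mid (p := pre) (u := nseq k x) (q := post)) //.
rewrite size_nseq lead_run_len_nseq.
have -> : (size pre + k).+1 <= (size pre).+1 = false by lia.
by rewrite subSS addKn eqxx.
Qed.

Lemma flash_on_outer_runs n pre post x y k j v :
  0 < k -> 0 < j -> head y v != x -> last x v != y ->
  flash_on n.+1 pre (nseq k x ++ v ++ nseq j y) post =
  (nseq k x ++ nseq j y, if v is [::] then 0 else k)
    :: flash_on n (pre ++ nseq k x) v (nseq j y ++ post).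
Proof.
move=> hk hj hv lv; rewrite {1}/flash_on /=.
rewrite (substr_mid (p := pre) (u := nseq k x ++ v ++ nseq j y) (q := post)) //.
rewrite !size_cat !size_nseq.
have -> : (size pre + (k + (size v + j))).+1 <= (size pre).+1 = false by lia.
rewrite lead_run_len_nseq_cat ?head_cat_nseq //.
have -> : (k == (size pre + (k + (size v + j))).+1 - (size pre).+1) = false by lia.
rewrite catA trail_run_len_cat_nseq //; last first.
  by rewrite last_cat last_nseq.
rewrite (substr_mid (p := pre) (u := nseq k x) (q := v ++ nseq j y ++ post));
  [|by rewrite !catA|by []|by rewrite size_nseq; lia].
rewrite (substr_mid (p := pre ++ nseq k x ++ v) (u := nseq j y) (q := post));
  [|by rewrite !catA|by rewrite !size_cat size_nseq; lia|by rewrite !size_cat !size_nseq; lia].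
case: v {hv lv} => [|z v] /=.
  have -> : (size pre + (k + j)).+1 - j <= (size pre).+1 + k by lia.
  by rewrite flash_on_nil.
have -> : (size pre + (k + ((size v).+1 + j))).+1 - j <= (size pre).+1 + k = false by lia.
rewrite /flash_on; congr (_ :: flash_loop _ _ _ _); rewrite ?size_cat ?size_nseq /=;
  [by rewrite -!catA | lia | lia].
Qed.

Lemma flash_on_rle_outer n pre post x y b k c j :
  rle_ok (x :: rcons b y) (k :: rcons c j) ->
  flash_on n.+1 pre (rle_string (x :: rcons b y) (k :: rcons c j)) post =
  (nseq k x ++ nseq j y, if b is [::] then 0 else k)
    :: flash_on n (pre ++ nseq k x) (rle_string b c) (nseq j y ++ post).
Proof.
move=> ok; have [hk hj okb hb lb] := rle_ok_outer ok; have [sc _ _] := okb.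
rewrite rle_string_cons rle_string_rcons // flash_on_outer_runs //;
  rewrite ?head_rle_string ?last_rle_string //.
by case: b c okb {ok sc hb lb} => [|z b] [|[|k'] c] // [].
Qed.

End FlashOn.

Section FlashOnRle.
Variable S : eqType.
Implicit Types (pre post : seq (hsym S)) (b : seq (hsym S)) (c : seq nat).

Lemma size_flash_on_rle n pre post b c : size b <= n.*2 -> rle_ok b c ->
  size (flash_on n pre (rle_string b c) post) = uphalf (size b).
Proof.
elim/seq_outer_ind: b n pre post c => [|x|x y b IH] n pre post c hn ok.
- by case: c ok => [|? ?] [] // _ _ _; rewrite flash_on_nil.
- case: n hn => // n _; case: c ok => [|k [|? ?]] [] //= _ _ /andP[hk _].
  by rewrite rle_string1 flash_on_run.
- case: n hn => // n hn; have [k [c' [j ?]]] := rle_ok_outer_split ok.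
  subst c; have [_ _ okb _ _] := rle_ok_outer ok.
  by rewrite flash_on_rle_outer //= IH //; move: hn; rewrite /= size_rcons; lia.
Qed.

Lemma nth_flash_on_rle n n' pre post pre' post' b c c' t0 d :
  size b <= n.*2 -> size b <= n'.*2 -> rle_ok b c -> rle_ok b c' -> d.*2 < size b ->
  (nth t0 (flash_on n pre (rle_string b c) post) d
     == nth t0 (flash_on n' pre' (rle_string b c') post') d)
  = (nth 0 c d == nth 0 c' d)
    && (nth 0 c ((size b).-1 - d) == nth 0 c' ((size b).-1 - d)).
Proof.
elim/seq_outer_ind: b n n' pre post pre' post' c c' d
  => [|x|x y b IH] n n' pre post pre' post' c c' d hn hn' ok ok' hd //.
- case: n n' hn hn' => // n [] // n' _ _; case: d hd => // _.
  case: c ok => [|k [|? ?]] [] //= _ _ /andP[hk _].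
  case: c' ok' => [|k' [|? ?]] [] //= _ _ /andP[hk' _].
  by rewrite !rle_string1 !flash_on_run // xpair_eqE eq_nseq andbT andbb.
case: n n' hn hn' => // n [] // n' hn hn'.
have [k [cM [j ?]]] := rle_ok_outer_split ok; subst c.
have [k' [cM' [j' ?]]] := rle_ok_outer_split ok'; subst c'.
have [_ _ okb _ lb] := rle_ok_outer ok; have [_ _ okb' _ _] := rle_ok_outer ok'.
have sc : size cM = size b by case: okb.
have sc' : size cM' = size b by case: okb'.
rewrite !flash_on_rle_outer //; case: d hd => [|d] hd.
  rewrite /= size_rcons subn0 -{1}sc -sc' !nth_cons_rcons_last.
  case: b {IH hn hn' ok ok' okb okb' hd} sc sc' lb => [|z b] sc sc' lb /=.
    by rewrite xpair_eqE eq_nseq_cat2 // andbT.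
  by rewrite xpair_eqE andbC; case: eqP => //= <-; rewrite eqseq_cat // eqxx eq_nseq.
have hdb : d.*2 < size b by move: hd; rewrite /= size_rcons; lia.
have -> : (size (x :: rcons b y)).-1 - d.+1 = size b - d by rewrite /= size_rcons; lia.
rewrite /= size_rcons in hn hn'.
rewrite !nth_cons_rcons ?sc ?sc'; try lia.
rewrite [nth t0 _ d.+1]/= [nth t0 _ d.+1]/= IH //; try lia.
by have -> : (size b).-1 - d = (size b - d).-1 by lia.
Qed.

End FlashOnRle.

Lemma map_rle_string (X Y : eqType) (f : X -> Y) b c :
  map f (rle_string b c) = rle_string (map f b) c.
Proof. by elim: b c => [|x b IH] [|k c] //=; rewrite map_cat map_nseq IH. Qed.

Section Shat.
Variable S : eqType.
Implicit Types (a : seq S) (m : seq nat).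

Lemma size_shat a : size (shat a) = (size a).+2.
Proof. by rewrite /= size_rcons size_map. Qed.

Lemma shat_rle_string a m : size m = size a ->
  shat (rle_string a m) = rle_string (shat a) (1 :: rcons m 1).
Proof.
move=> sm; rewrite rle_string_cons rle_string_rcons ?size_map //.
by rewrite -map_rle_string /shat -cats1.
Qed.

Lemma rle_ok_shat a m : rle_ok a m -> rle_ok (shat a) (1 :: rcons m 1).
Proof.
case=> sm sa pm; split.
- by rewrite /= !size_rcons size_map sm.
- rewrite /= rcons_path; apply/andP; split.
    by case: a sa {sm} => [|x a] //=; rewrite path_map.
  by case: a {sa sm} => [|x a] //=; rewrite last_map.
- by rewrite /= all_rcons pm.
Qed.

Lemma flashbackE a : flashback a = flash_on (size a).+3 [::] (shat a) [::].
Proof. by rewrite /flash_on cats0 add0n size_shat. Qed.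

Lemma flashback_rle_string a m : rle_ok a m ->
  flashback (rle_string a m)
  = flash_on (size (rle_string a m)).+3 [::] (rle_string (shat a) (1 :: rcons m 1)) [::].
Proof. by case=> sm _ _; rewrite flashbackE shat_rle_string. Qed.

Lemma leq_size_shat_fuel a m : rle_ok a m ->
  size (shat a) <= (size (rle_string a m)).+3.*2.
Proof. by move=> ok; have := leq_size_rle_string ok; rewrite size_shat; lia. Qed.

Lemma size_flashback_rle_string a m : rle_ok a m ->
  size (flashback (rle_string a m)) = uphalf (size a).+2.
Proof.
move=> ok; have [fuel ok_shat] := (leq_size_shat_fuel ok, rle_ok_shat ok).
by rewrite flashback_rle_string // size_flash_on_rle // size_shat.
Qed.

Lemma eq_nth_flashback_rle_string a m m' t0 d :
  rle_ok a m -> rle_ok a m' -> d.*2 < (size a).+2 ->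
  (nth t0 (flashback (rle_string a m)) d == nth t0 (flashback (rle_string a m')) d)
  = (nth 0 (1 :: rcons m 1) d == nth 0 (1 :: rcons m' 1) d)
    && (nth 0 (1 :: rcons m 1) ((size a).+1 - d)
          == nth 0 (1 :: rcons m' 1) ((size a).+1 - d)).
Proof.
move=> ok ok' hd; rewrite -(size_shat a) in hd.
have [fuel fuel'] := (leq_size_shat_fuel ok, leq_size_shat_fuel ok').
have [ok_shat ok_shat'] := (rle_ok_shat ok, rle_ok_shat ok').
by rewrite !flashback_rle_string // nth_flash_on_rle // size_shat.
Qed.

End Shat.

Lemma nth_border_neq (m m' : seq nat) i : size m = size m' ->
  (nth 0 (1 :: rcons m 1) i != nth 0 (1 :: rcons m' 1) i)
  = (0 < i <= size m) && (nth 0 m i.-1 != nth 0 m' i.-1).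
Proof.
move=> sm; case: i => [|i] //=; rewrite !nth_rcons -sm.
by case: ltnP => //= _; case: eqP.
Qed.

Lemma mirror_pair_diff_iff (r : nat) (m m' : seq nat) d : size m = r -> size m' = r ->
  (d.*2 < r.+2 /\
   ~~ ((nth 0 (1 :: rcons m 1) d == nth 0 (1 :: rcons m' 1) d)
       && (nth 0 (1 :: rcons m 1) (r.+1 - d) == nth 0 (1 :: rcons m' 1) (r.+1 - d))))
  <-> exists i, [/\ 1 <= i <= r, nth 0 m i.-1 <> nth 0 m' i.-1 & d = minn i (r.+1 - i)].
Proof.
move=> <- sm'; rewrite negb_and !nth_border_neq //.
split=> [[hd /orP[/andP[hi /eqP ne]|/andP[hi /eqP ne]]]|[i [hi ne ->]]].
- by exists d; split=> //; lia.
- exists ((size m).+1 - d); split=> //; lia.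
split; first lia.
apply/orP; case: (leqP i ((size m).+1 - i)) => h.
  by left; rewrite hi; apply/eqP.
right; have -> : (size m).+1 - ((size m).+1 - i) = i by lia.
by rewrite hi; apply/eqP.
Qed.

Theorem proposition6p8 (S : eqType) (a : seq S) (m m' : seq nat) :
  0 < size a -> rle_ok a m -> rle_ok a m' ->
  let r := size a in
  let F := flashback (rle_string a m) in
  let F' := flashback (rle_string a m') in
  size F = size F' /\
  (forall d : nat,
     (d < size F /\ nth ([::], 0) F d <> nth ([::], 0) F' d) <->
     (exists i : nat, [/\ 1 <= i <= r, nth 0 m i.-1 <> nth 0 m' i.-1
                        & d = minn i (r.+1 - i)])).
Proof.
move=> _ ok ok' r F F'.
have [[sm _ _] [sm' _ _]] := (ok, ok').
have sF : size F = uphalf r.+2 := size_flashback_rle_string ok.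
split=> [|d]; first by rewrite sF size_flashback_rle_string.
rewrite -(mirror_pair_diff_iff _ sm sm') sF gtn_uphalf_double.
split=> -[hd ne]; split=> //.
  by rewrite -(eq_nth_flashback_rle_string ([::], 0) ok ok') //; apply/eqP.
by apply/eqP; rewrite (eq_nth_flashback_rle_string _ ok ok').
Qed.
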